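(* Let $n\ge3$. For any real $3$-dimensional subspace $W\subset\mathbb{C}^n$, the orbit $\mathrm{SU}(n)\cdot W$ has the transitivity property. Consequently, for $p\ge3$, any nonempty compact $\mathrm{U}(n)$-invariant subset $\mathbb{G}\subset G^{\mathbb{R}}(p,\mathbb{C}^n)$ has the transitivity property.
   Context: $G^{\mathbb{R}}(p,\mathbb{C}^n)$ is the Grassmannian of real $p$-dimensional subspaces of $\mathbb{C}^n=\mathbb{R}^{2n}$. A set $\mathbb{G}$ of real planes in $\mathbb{R}^{2n}$ has the transitivity property if for any two vectors $x,y$ there exist $W_1,\dots,W_k\in\mathbb{G}$ with $x\in W_1$, $y\in W_k$ and $\dim_{\mathbb{R}}(W_i\cap W_{i+1})>0$ for $i=1,\dots,k-1$. *)

From HB Require Import structures.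
From mathcomp Require Import all_boot all_order all_algebra.
From mathcomp Require Import classical_sets reals topology normedtype.
From mathcomp Require Import complex.
Set Implicit Arguments. Unset Strict Implicit. Unset Printing Implicit Defensive.
Import Order.TTheory GRing.Theory Num.Theory numFieldTopology.Exports.
Local Open Scope ring_scope.
Local Open Scope classical_set_scope.

Section Defs.
Variables (R : realType) (n : nat).

(* C^n is identified with R^(2n) = R^(n+n) via a + i b |-> [a b] (row vectors).
   A complex n x n matrix M acting by right multiplication x |-> x M on row
   vectors of C^n is realified as the following real (n+n) x (n+n) matrix:
   [a b] *m realmx M = realification of ((a + i b) M). *)
Definition realmx (M : 'M[R[i]]_n) : 'M[R]_(n + n) :=
  block_mx (map_mx (@complex.Re R) M) (map_mx (@complex.Im R) M)
           (- map_mx (@complex.Im R) M) (map_mx (@complex.Re R) M).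

Definition unitary_mx (M : 'M[R[i]]_n) : Prop :=
  M *m (map_mx (@conjc R) M)^T = 1%:M.
Definition special_unitary_mx (M : 'M[R[i]]_n) : Prop :=
  unitary_mx M /\ \det M = 1.

(* The real Grassmannian G^R(p, C^n): a real p-dimensional subspace of
   R^(2n) is represented by the orthogonal projection matrix onto it
   (symmetric idempotent of rank p); the subspace is its row space.
   The topology is the one induced from the space of real matrices. *)
Definition grassR (p : nat) : set 'M[R]_(n + n) :=
  [set P | P^T = P /\ P *m P = P /\ \rank P = p].

(* Action of a (unitary) complex matrix M on a subspace given by its
   orthogonal projection P: the projection onto the image subspace. *)
Definition actmx (M : 'M[R[i]]_n) (P : 'M[R]_(n + n)) : 'M[R]_(n + n) :=
  (realmx M)^T *m P *m realmx M.

Definition SU_orbit (P : 'M[R]_(n + n)) : set 'M[R]_(n + n) :=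
  [set Q | exists M, special_unitary_mx M /\ Q = actmx M P].

Definition U_invariant (G : set 'M[R]_(n + n)) : Prop :=
  forall M P, unitary_mx M -> G P -> G (actmx M P).

Definition transitivity_property (G : set 'M[R]_(n + n)) : Prop :=
  forall x y : 'rV[R]_(n + n),
    exists (k : nat) (W : nat -> 'M[R]_(n + n)),
      [/\ (0 < k)%N,
          (forall i, (i < k)%N -> G (W i)),
          (x <= W 0%N)%MS,
          (y <= W k.-1)%MS &
          (forall i, (i.+1 < k)%N -> (0 < \rank (W i :&: W i.+1)%MS)%N)].

End Defs.
Arguments grassR R n p : clear implicits.

From Pilot Require Import Defs.
From HB Require Import structures.
From mathcomp Require Import all_boot all_order all_algebra.
From mathcomp Require Import classical_sets reals topology normedtype.
From mathcomp Require Import complex spectral sesquilinear.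
From mathcomp Require Import ring zify.
Set Implicit Arguments.
Unset Strict Implicit.
Unset Printing Implicit Defensive.
Import Order.TTheory GRing.Theory Num.Theory numFieldTopology.Exports.
Local Open Scope ring_scope.
Local Open Scope sesquilinear_scope.

(* A real subspace W of C^n of real dimension at least 3 contains vectors u, w
   that are orthonormal for the Hermitian product: take a unit vector u in W and
   a unit vector w in W real-orthogonal to both u and i u, which is only two real
   conditions.  Given x and y, pick a unit vector z Hermitian-orthogonal to x and
   y (here n >= 3 is used) and unit vectors x', y' orthogonal to z with
   x in R x' and y in R y'.  As n > 2, SU(n) acts transitively on orthonormal
   2-frames, so some g1, g2 in SU(n) send (u, w) to (x', z) and to (y', z); then
   g1 W contains x, g2 W contains y, and both contain z.  For the second claim
   apply this to the SU(n)-orbit of any member of G, which lies in G. *)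

Local Notation realmx := Defs.realmx.

Local Notation "B ^!" :=
  (orthomx Num.Def.conjC (mx_of_hermitian (hermitian1mx _)) B) : matrix_set_scope.

Section UnitaryFrames.
Context {C : numClosedFieldType}.

Lemma dotmx_eq0C n (u v : 'rV[C]_n) : (dotmx u v == 0) = (dotmx v u == 0).
Proof. exact: herm_eq0C. Qed.

Lemma dotmxZl n c (u v : 'rV[C]_n) : dotmx (c *: u) v = c * dotmx u v.
Proof. by rewrite linearZl_LR. Qed.

Lemma col_mx_unitary n (p q : 'rV[C]_n) :
  dotmx p p = 1 -> dotmx q q = 1 -> dotmx p q = 0 -> col_mx p q \is unitarymx.
Proof.
move=> pp qq pq; have /eqP qp : dotmx q p == 0 by rewrite -dotmx_eq0C pq.
have dotE (a b : 'rV[C]_n) : a *m b^t* = (dotmx a b)%:M.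
  by apply/matrixP => i j; rewrite !ord1 [RHS]mxE eqxx mulr1n dotmxE.
apply/unitarymxP; rewrite tr_col_mx map_row_mx mul_col_row !dotE pp qq pq qp.
by rewrite raddf0 -scalar_mx_block.
Qed.

Lemma dotmx_ortho_unit m n (A : 'M[C]_(m, n)) : (m < n)%N ->
  exists z : 'rV[C]_n, dotmx z z = 1 /\ forall u, (u <= A)%MS -> dotmx u z = 0.
Proof.
move=> mn; set B := schmidt (row_base A^!%MS).
have Bu : B \is unitarymx by rewrite schmidt_unitarymx ?rank_leq_col.
have r0 : (0 < \rank A^!%MS)%N.
  by rewrite rank_ortho subn_gt0 (leq_ltn_trans (rank_leq_row A)).
exists (row (Ordinal r0) B); split; first by rewrite (row_unitarymxP Bu) eqxx.
have zA : (row (Ordinal r0) B <= A^!)%MS.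
  apply: submx_trans (row_sub _ _) _.
  by rewrite eqmx_schmidt_free ?row_base_free // eq_row_base.
rewrite orthomx_sym in zA => u uA.
by rewrite dotmxE (orthomx1P (submx_trans uA zA)) mxE.
Qed.

Lemma unitarymx_ortho_complete m n (V : 'M[C]_(m, n)) : V \is unitarymx ->
  col_mx V (schmidt (row_base V^!%MS)) \is unitarymx.
Proof.
move=> Vu; apply/unitarymxP; rewrite tr_col_mx map_row_mx mul_col_row.
rewrite (unitarymxP Vu) (unitarymxP (schmidt_unitarymx _ _)) ?rank_leq_col //.
have VB : (schmidt (row_base V^!%MS) <= V^!)%MS.
  by rewrite eqmx_schmidt_free ?row_base_free // eq_row_base.
have BV := VB; rewrite orthomx_sym in BV.
by rewrite (orthomx1P BV) (orthomx1P VB) -scalar_mx_block.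
Qed.

Lemma castmx_unitary m m' n (e : m = m') (X : 'M[C]_(m, n)) :
  (castmx (e, erefl) X \is unitarymx) = (X \is unitarymx).
Proof. by case: m' / e; rewrite castmx_id. Qed.

Lemma unitarymx_complete m n (V : 'M[C]_(m, n)) (mn : (m <= n)%N) :
  V \is unitarymx ->
  exists2 A : 'M[C]_n, A \is unitarymx & rowsub (widen_ord mn) A = V.
Proof.
move=> Vu; have e : (m + \rank V^!%MS)%N = n.
  by rewrite rank_ortho mxrank_unitary // subnKC.
exists (castmx (e, erefl) (col_mx V (schmidt (row_base V^!%MS)))).
  by rewrite castmx_unitary unitarymx_ortho_complete.
apply/matrixP => i j; rewrite !mxE castmxE /= cast_ord_id.
have -> : cast_ord (esym e) (widen_ord mn i) = lshift _ i by apply: val_inj.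
by rewrite col_mxEu.
Qed.

Lemma unitarymx_det n (M : 'M[C]_n) : M \is unitarymx -> \det M * (\det M)^* = 1.
Proof.
by move=> /unitarymxP /(congr1 determinant); rewrite det_mulmx det1 det_map_mx det_tr.
Qed.

Definition phase_mx n (k : 'I_n) (c : C) : 'M[C]_n :=
  diag_mx (\row_j (if j == k then c else 1)).

Lemma phase_mx_unitary n (k : 'I_n) c : c * c^* = 1 -> phase_mx k c \is unitarymx.
Proof.
move=> cc; apply/unitarymxP; rewrite tr_diag_mx map_diag_mx mulmx_diag.
rewrite -diag_const_mx; congr diag_mx; apply/rowP => j; rewrite !mxE.
by case: eqP; rewrite ?rmorph1 ?mulr1.
Qed.

Lemma det_phase_mx n (k : 'I_n) c : \det (phase_mx k c) = c.
Proof.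
rewrite det_diag (bigD1 k) //= big1 => [|j /negbTE jk]; last by rewrite mxE jk.
by rewrite mxE eqxx mulr1.
Qed.

Lemma rowsub_phase_mx m n (f : 'I_m -> 'I_n) k c : (forall i, f i != k) ->
  rowsub f 1%:M *m phase_mx k c = rowsub f 1%:M.
Proof.
move=> fk; apply/matrixP => i j; rewrite mul_mx_diag !mxE.
by have [<-|] := eqVneq (f i) j; rewrite ?(negbTE (fk i)) ?mulr1 ?mul0r.
Qed.

Lemma unitarymx_transitive_frames m n (V1 V2 : 'M[C]_(m, n)) : (m < n)%N ->
  V1 \is unitarymx -> V2 \is unitarymx ->
  exists g : 'M[C]_n, [/\ g \is unitarymx, \det g = 1 & V1 *m g = V2].
Proof.
move=> mn V1u V2u; have mn' := ltnW mn.
have [A1 A1u <-] := unitarymx_complete mn' V1u.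
have [A2 A2u <-] := unitarymx_complete mn' V2u.
set d := \det (A1^t* *m A2).
have dd : d * d^* = 1 by apply/unitarymx_det/mul_unitarymx; rewrite ?trmxC_unitary.
(* A phase on coordinate [m], which the frames do not see, corrects the determinant. *)
have Du : phase_mx (Ordinal mn) d^* \is unitarymx.
  by apply: phase_mx_unitary; rewrite conjCK mulrC.
exists (A1^t* *m phase_mx (Ordinal mn) d^* *m A2); split.
- by rewrite !mul_unitarymx ?trmxC_unitary.
- by rewrite !det_mulmx det_phase_mx mulrAC -det_mulmx.
rewrite rowsubE [in RHS]rowsubE !mulmxA mulmxtVK // rowsub_phase_mx // => i.
by rewrite -(inj_eq val_inj) /= neq_ltn ltn_ord.
Qed.

End UnitaryFrames.

Section Realification.
Variables (R : realType) (n : nat).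
Local Notation C := R[i].
Local Notation Re := (@complex.Re R).
Local Notation Im := (@complex.Im R).
Implicit Types (z : 'rV[C]_n) (a b : 'rV[R]_(n + n)) (M : 'M[C]_n).

Lemma ReM (x y : C) : Re (x * y) = Re x * Re y - Im x * Im y.
Proof. by case: x; case: y. Qed.

Lemma ImM (x y : C) : Im (x * y) = Re x * Im y + Im x * Re y.
Proof. by case: x; case: y. Qed.

Lemma ReD (x y : C) : Re (x + y) = Re x + Re y.
Proof. exact: (raddfD (Re : Rcomplex R -> R)). Qed.

Lemma ImD (x y : C) : Im (x + y) = Im x + Im y.
Proof. exact: (raddfD (Im : Rcomplex R -> R)). Qed.

Lemma Re_sum (I : Type) (r : seq I) (P : pred I) (F : I -> C) :
  Re (\sum_(i <- r | P i) F i) = \sum_(i <- r | P i) Re (F i).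
Proof. exact: (raddf_sum (Re : Rcomplex R -> R)). Qed.

Lemma Im_sum (I : Type) (r : seq I) (P : pred I) (F : I -> C) :
  Im (\sum_(i <- r | P i) F i) = \sum_(i <- r | P i) Im (F i).
Proof. exact: (raddf_sum (Im : Rcomplex R -> R)). Qed.

Lemma complexP (x y : C) : Re x = Re y -> Im x = Im y -> x = y.
Proof. by case: x; case: y => a b c d /= -> ->. Qed.

Lemma conjCE (x : C) : x^* = conjc x.
Proof. by case: x. Qed.

Definition realrv z : 'rV[R]_(n + n) := row_mx (map_mx Re z) (map_mx Im z).
Definition cplxrv a : 'rV[C]_n := \row_j (lsubmx a 0 j +i* rsubmx a 0 j)%C.

Lemma cplxrvK : cancel cplxrv realrv.
Proof.
by move=> a; rewrite -[RHS]hsubmxK; congr row_mx; apply/rowP => j; rewrite !mxE.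
Qed.

Lemma realrvK : cancel realrv cplxrv.
Proof.
by move=> z; apply/rowP => j; rewrite mxE row_mxKl row_mxKr !mxE; case: (z 0 j).
Qed.

Lemma realrv_eq0 z : (realrv z == 0) = (z == 0).
Proof.
have realrv0 : realrv 0 = 0.
  by rewrite /realrv -row_mx0; congr row_mx; apply/rowP => j; rewrite !mxE.
by rewrite -realrv0 (inj_eq (can_inj realrvK)).
Qed.

Lemma cplxrv_eq0 a : (cplxrv a == 0) = (a == 0).
Proof.
have cplxrv0 : cplxrv 0 = 0 by apply/rowP => j; rewrite !mxE.
by rewrite -cplxrv0 (inj_eq (can_inj cplxrvK)).
Qed.

Lemma cplxrvZ (c : R) a : cplxrv (c *: a) = c%:C%C *: cplxrv a.
Proof. by apply/rowP => j; apply: complexP; rewrite !mxE /= ?ReM ?ImM /=; ring. Qed.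

Lemma realrv_mul z M : realrv (z *m M) = realrv z *m realmx M.
Proof.
rewrite /realrv /realmx mul_row_block; congr row_mx; apply/rowP => j.
all: rewrite !mxE ?Re_sum ?Im_sum -big_split /=; apply: eq_bigr => k _.
all: rewrite !mxE ?ReM ?ImM; ring.
Qed.

Lemma realmxM M1 M2 : realmx (M1 *m M2) = realmx M1 *m realmx M2.
Proof.
rewrite /realmx mulmx_block; congr block_mx; apply/matrixP => i j;
  rewrite !mxE ?Re_sum ?Im_sum -?sumrN -big_split /=; apply: eq_bigr => k _;
  rewrite !mxE ?ReM ?ImM; ring.
Qed.

Lemma realmx1 : realmx (1%:M : 'M[C]_n) = 1%:M.
Proof.
rewrite /realmx [RHS](scalar_mx_block n n); congr block_mx;
  apply/matrixP => i j; rewrite !mxE; by case: (i == j); rewrite /= ?oppr0.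
Qed.

Lemma realmx_trC M : realmx (M^t*) = (realmx M)^T.
Proof.
rewrite /realmx tr_block_mx; congr block_mx; apply/matrixP => i j;
  rewrite !mxE conjCE; by case: (M j i) => a b /=; rewrite ?opprK.
Qed.

Lemma unitary_mxE M : unitary_mx M <-> M \is unitarymx.
Proof.
rewrite /unitary_mx; have -> : (map_mx (@conjc R) M)^T = M^t*.
  by apply/matrixP => i j; rewrite !mxE conjCE.
by split => [|/unitarymxP]; [move/unitarymxP|].
Qed.

Lemma actmx_eqmx M P : M \is unitarymx -> (actmx M P :=: P *m realmx M)%MS.
Proof.
move=> /unitarymxP /mulmx1C MM; rewrite /actmx -mulmxA; apply: eqmxMfull.
rewrite row_full_unit; case: (mulmx1_unit (_ : (realmx M)^T *m realmx M = 1%:M)) => //.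
by rewrite -realmx_trC -realmxM MM realmx1.
Qed.

Lemma realrv_sub_actmx M P z : M \is unitarymx ->
  (realrv z <= P)%MS -> (realrv (z *m M) <= actmx M P)%MS.
Proof. by move=> Mu zP; rewrite actmx_eqmx // realrv_mul submxMr. Qed.

(* The realification of multiplication by [i]. *)
Definition Jrv a : 'rV[R]_(n + n) := row_mx (- rsubmx a) (lsubmx a).

Lemma trJrvEl a k : (Jrv a)^T (lshift n k) 0 = - a 0 (rshift n k).
Proof. by rewrite mxE row_mxEl !mxE. Qed.

Lemma trJrvEr a k : (Jrv a)^T (rshift n k) 0 = a 0 (lshift n k).
Proof. by rewrite mxE row_mxEr mxE. Qed.

Lemma dotmx_cplxrv a b : dotmx (cplxrv a) (cplxrv b) =
  ((a *m b^T) 0 0)%:C%C + 'i%C * ((a *m (Jrv b)^T) 0 0)%:C%C.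
Proof.
rewrite dotmxE !mxE !big_split_ord /= !rmorphD /= !rmorph_sum /= mulrDr.
rewrite !mulr_sumr -!big_split /=; apply: eq_bigr => k _.
rewrite trJrvEl trJrvEr !mxE conjCE.
by apply: complexP; rewrite /= ?ReD ?ImD ?ReM ?ImM /=; ring.
Qed.

Lemma dotmx_cplxrv_diag a : dotmx (cplxrv a) (cplxrv a) = ((a *m a^T) 0 0)%:C%C.
Proof.
rewrite dotmx_cplxrv; have -> : (a *m (Jrv a)^T) 0 0 = 0.
  rewrite mxE big_split_ord /= -big_split /= big1 // => k _.
  by rewrite trJrvEl trJrvEr; ring.
by rewrite mulr0 addr0.
Qed.

Lemma cplxrv_normalize a : a != 0 ->
  exists2 s : R, s != 0 & dotmx (cplxrv (s *: a)) (cplxrv (s *: a)) = 1.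
Proof.
move=> a0; have N0 : 0 < (a *m a^T) 0 0.
  by rewrite -ltcR -dotmx_cplxrv_diag dnorm_gt0 cplxrv_eq0.
exists (Num.sqrt ((a *m a^T) 0 0))^-1; first by rewrite invr_eq0 sqrtr_eq0 -ltNge.
rewrite dotmx_cplxrv_diag linearZ /= -scalemxAl -scalemxAr scalerA -expr2.
by rewrite [X in X%:C%C]mxE exprVn sqr_sqrtr ?ltW // mulVf ?gt_eqF.
Qed.

Lemma submx_unitary_frame (P : 'M[R]_(n + n)) : (3 <= \rank P)%N ->
  exists u w,
    [/\ (u <= P)%MS, (w <= P)%MS & col_mx (cplxrv u) (cplxrv w) \is unitarymx].
Proof.
move=> rP; have u0 : nz_row P != 0.
  by rewrite nz_row_eq0 -mxrank_eq0 -lt0n (leq_trans _ rP).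
have [s _ uu] := cplxrv_normalize u0; set u := s *: nz_row P in uu *.
(* Real orthogonality to [u] and [i u] is Hermitian orthogonality to [u]. *)
set K := kermx (col_mx u (Jrv u))^T.
have PK : (0 < \rank (P :&: K))%N.
  have := mxrank_sum_cap P K; have := rank_leq_col (P + K)%MS.
  rewrite /K mxrank_ker; have := rank_leq_col (col_mx u (Jrv u))^T; lia.
have w0 : nz_row (P :&: K)%MS != 0 by rewrite nz_row_eq0 -mxrank_eq0 -lt0n.
have [t _ ww] := cplxrv_normalize w0; set w := t *: _ in ww *.
have : (w <= P :&: K)%MS by rewrite scalemx_sub ?nz_row_sub.
rewrite sub_capmx => /andP [wP /sub_kermxP].
rewrite tr_col_mx mul_mx_row -row_mx0 => /eq_row_mx [wu wJu].
have /eqP uw : dotmx (cplxrv u) (cplxrv w) == 0.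
  by rewrite dotmx_eq0C dotmx_cplxrv wu wJu mxE mulr0 addr0.
exists u, w; split => //; last exact: col_mx_unitary.
by rewrite scalemx_sub ?nz_row_sub.
Qed.

Lemma unitary_frame_through x z : (1 < n)%N ->
  dotmx z z = 1 -> dotmx (cplxrv x) z = 0 ->
  exists (c : R) (w : 'rV[C]_n), x = c *: realrv w /\ col_mx w z \is unitarymx.
Proof.
move=> n1 zz xz; have [->|x0] := eqVneq x 0.
  have [w [ww zw]] := dotmx_ortho_unit z n1.
  have /eqP wz : dotmx w z == 0 by rewrite dotmx_eq0C zw.
  by exists 0, w; rewrite scale0r; split => //; apply: col_mx_unitary.
have [s s0 ss] := cplxrv_normalize x0.
exists s^-1, (cplxrv (s *: x)); split; first by rewrite cplxrvK scalerA mulVf ?scale1r.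
by apply: col_mx_unitary; rewrite // cplxrvZ dotmxZl xz mulr0.
Qed.

Lemma transitivity_property_SU_orbit (P : 'M[R]_(n + n)) :
  (3 <= n)%N -> (3 <= \rank P)%N -> transitivity_property (SU_orbit P).
Proof.
move=> n3 rP x y.
have [u [w [uP wP uwF]]] := submx_unitary_frame rP.
have [z [zz zxy]] := dotmx_ortho_unit (col_mx (cplxrv x) (cplxrv y)) n3.
have [xz yz] : dotmx (cplxrv x) z = 0 /\ dotmx (cplxrv y) z = 0.
  have := submx_refl (col_mx (cplxrv x) (cplxrv y)).
  by rewrite col_mx_sub => /andP [/zxy ? /zxy ?].
have [cx [x' [-> x'zF]]] := unitary_frame_through (ltnW n3) zz xz.
have [cy [y' [-> y'zF]]] := unitary_frame_through (ltnW n3) zz yz.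
have [g1 [g1u g1d +]] := unitarymx_transitive_frames n3 uwF x'zF.
rewrite (mul_col_mx (cplxrv u)) => /(@eq_col_mx _ 1 1) [ux' wz1].
have [g2 [g2u g2d +]] := unitarymx_transitive_frames n3 uwF y'zF.
rewrite (mul_col_mx (cplxrv u)) => /(@eq_col_mx _ 1 1) [uy' wz2].
have inP v g : g \is unitarymx -> (v <= P)%MS ->
    (realrv (cplxrv v *m g) <= actmx g P)%MS.
  by move=> gu vP; rewrite realrv_sub_actmx ?cplxrvK.
exists 2%N, (fun i => if i == 0%N then actmx g1 P else actmx g2 P); split => //.
- by move=> [|i] _ /=; [exists g1 | exists g2]; do !split => //; apply/unitary_mxE.
- by rewrite /= scalemx_sub // -ux' inP.
- by rewrite /= scalemx_sub // -uy' inP.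
have z0 : z != 0 by have := @ltr01 C; rewrite -zz dnorm_gt0.
move=> [|i] // _; apply: (@leq_trans (\rank (realrv z))).
  by rewrite rank_rV lt0b realrv_eq0.
by rewrite mxrankS // sub_capmx -{1}wz1 -wz2 !inP.
Qed.

End Realification.

Local Open Scope classical_set_scope.

Lemma transitivity_property_sub (R : realType) n (G G' : set 'M[R]_(n + n)) :
  G `<=` G' -> transitivity_property G -> transitivity_property G'.
Proof.
move=> GG' tG x y; have [k [W [k0 WG xW yW WW]]] := tG x y.
by exists k, W; split => // i /WG /GG'.
Qed.

Theorem corollary11p5 (R : realType) (n : nat) (hn : (3 <= n)%N) :
  (forall W : 'M[R]_(n + n), grassR R n 3 W ->
     transitivity_property (SU_orbit W))
  /\
  (forall (p : nat), (3 <= p)%N ->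
     forall G : set 'M[R]_(n + n),
       G `<=` grassR R n p -> G !=set0 -> compact G -> U_invariant G ->
       transitivity_property G).
Proof.
split=> [W [_ [_ rW]]|p p3 G Gp [P GP] _ UG].
  by apply: transitivity_property_SU_orbit; rewrite ?rW.
have [_ [_ rP]] := Gp P GP.
have tP : transitivity_property (SU_orbit P).
  by apply: transitivity_property_SU_orbit; rewrite ?rP.
by apply: transitivity_property_sub tP => _ [g [[gu _] ->]]; apply: UG.
Qed.
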